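(* For $n\ge 2$, $g(n)\ge \left\lceil\frac{(n-1)^2+1}{2}\right\rceil$.
   Context: $K_n$ is the complete graph on $n$ vertices. A complete bipartite subgraph of a graph $G$ has two disjoint nonempty vertex classes $X,Y$ and edge set all $xy$ with $x\in X,y\in Y$. A block is a set $E(B_1)\times E(B_2)$ where $B_1,B_2$ are complete bipartite subgraphs of $K_n$; $g(n)$ is the minimum number of blocks partitioning $E(K_n)\times E(K_n)$. *)

From mathcomp Require Import all_boot.
Set Implicit Arguments. Unset Strict Implicit. Unset Printing Implicit Defensive.

Definition edgeK (n : nat) : {set {set 'I_n}} := [set e : {set 'I_n} | #|e| == 2].

Definition bip_edges (n : nat) (X Y : {set 'I_n}) : {set {set 'I_n}} :=
  [set [set x; y] | x in X, y in Y].

Definition is_cbip_edgeset (n : nat) (E : {set {set 'I_n}}) : bool :=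
  [exists X : {set 'I_n}, exists Y : {set 'I_n},
    [&& X != set0, Y != set0, [disjoint X & Y] & E == bip_edges X Y]].

Definition is_block (n : nat) (S : {set {set 'I_n} * {set 'I_n}}) : bool :=
  [exists E1 : {set {set 'I_n}}, exists E2 : {set {set 'I_n}},
    [&& is_cbip_edgeset E1, is_cbip_edgeset E2 & S == setX E1 E2]].

Definition block_partition (n : nat) (P : {set {set {set 'I_n} * {set 'I_n}}}) : bool :=
  partition P (setX (edgeK n) (edgeK n)) && [forall S in P, is_block S].

(* g(n): the minimum number of blocks in such a partition.  The default value
   #|E(K_n)|^2 is attained by the partition into singletons, so it never
   exceeds the true minimum. *)
Definition g (n : nat) : nat :=
  \big[minn/#|edgeK n| ^ 2]_(P : {set {set {set 'I_n} * {set 'I_n}}}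
                              | block_partition P) #|P|.

(* Weight each ordered pair of vertices (i, j) by V (i, j) and let Q(D) be the
   sum of V t * V u over the ordered pairs of cells t, u with
   ({t.1, u.1}, {t.2, u.2}) in D.  Q is additive over partitions.  On a block
   E(X,Y) x E(X',Y') it equals 2 (M(X,X') M(Y,Y') + M(X,Y') M(Y,X')), where
   M(A,B) is the mass of V on A x B; on all of E(K_n) x E(K_n) it equals
   T^2 - sum r_i^2 - sum c_j^2 + sum V^2 (T the total mass, r and c the row and
   column sums).  For a partition into p blocks with 2p <= (n-1)^2, the 2p
   equations M(X,X') = M(X,Y') = 0 together with the 2(n-1) equations making
   all margins equal to a common s number fewer than n^2, so they have a
   nonzero solution V.  Then Q vanishes on every block, yet on the whole product
   it is n(n-2) s^2 + sum V^2 > 0. *)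

From mathcomp Require Import all_boot all_order all_algebra.
From mathcomp Require Import ring zify.
Set Implicit Arguments. Unset Strict Implicit. Unset Printing Implicit Defensive.
Import Order.TTheory GRing.Theory Num.Theory.

Lemma set2_eq (T : finType) (a b c d : T) :
  [set a; b] = [set c; d] -> (a = c /\ b = d) \/ (a = d /\ b = c).
Proof.
move=> E.
have : a \in [set c; d] by rewrite -E set21.
have : b \in [set c; d] by rewrite -E set22.
have : c \in [set a; b] by rewrite E set21.
have : d \in [set a; b] by rewrite E set22.
rewrite !inE => /orP[]/eqP Hd /orP[]/eqP Hc /orP[]/eqP Hb /orP[]/eqP Ha; subst; tauto.
Qed.

Section Edges.
Variable n : nat.
Implicit Types X Y : {set 'I_n}.

Lemma mem_bip_edges X Y i k :
  ([set i; k] \in bip_edges X Y) = (i \in X) && (k \in Y) || (i \in Y) && (k \in X).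
Proof.
apply/imset2P/idP.
- by case=> x y Hx Hy /set2_eq [[-> ->]|[-> ->]]; rewrite Hx Hy ?orbT.
- case/orP=> /andP [Hi Hk]; first by exists i k.
  by exists k i => //; rewrite setUC.
Qed.

Lemma card_edgeK : #|edgeK n| = 'C(n, 2).
Proof. by rewrite card_draws card_ord. Qed.

End Edges.

Local Open Scope ring_scope.

Lemma sum_natr_mul (R : pzSemiRingType) (T : finType) (P : pred T) (F : T -> R) :
  \sum_t (P t)%:R * F t = \sum_(t | P t) F t.
Proof. by rewrite [RHS]big_mkcond; apply: eq_bigr => t _; rewrite mulr_natl mulrb. Qed.

Lemma natr_mem_sum (R : pzSemiRingType) (T : finType) (x : T) (D : {set T}) :
  (x \in D)%:R = \sum_(y in D) (x == y)%:R :> R.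
Proof.
case: (boolP (x \in D)) => xD.
  rewrite (bigD1 x) //= eqxx big1 ?addr0 // => y /andP[_ /negbTE].
  by rewrite eq_sym => ->.
by rewrite big1 // => y yD; case: eqP => // xy; rewrite xy yD in xD.
Qed.

Lemma natr_mem_cover (R : pzSemiRingType) (T : finType) (P : {set {set T}}) x :
  trivIset P -> (x \in cover P)%:R = \sum_(S in P) (x \in S)%:R :> R.
Proof.
move=> tP; rewrite natr_mem_sum (big_trivIset _ tP).
by apply: eq_bigr => S _; rewrite natr_mem_sum.
Qed.

Lemma natr_and (R : pzSemiRingType) (a b : bool) : (a && b)%:R = a%:R * b%:R :> R.
Proof. by rewrite -mulnb natrM. Qed.

Lemma natr_or (R : pzSemiRingType) (a b : bool) :
  ~~ (a && b) -> (a || b)%:R = a%:R + b%:R :> R.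
Proof. by case: a; case: b; rewrite ?addr0 ?add0r. Qed.

Lemma sum_fiber_sqr (R : comNzRingType) (T I : finType) (p : T -> I) (V : T -> R) :
  \sum_t \sum_u (p t == p u)%:R * (V t * V u) = \sum_i (\sum_(t | p t == i) V t) ^+ 2.
Proof.
have -> : \sum_t \sum_u (p t == p u)%:R * (V t * V u) =
          \sum_t V t * \sum_(u | p u == p t) V u.
  apply: eq_bigr => t _; rewrite -(sum_natr_mul (fun u => p u == p t)) big_distrr /=.
  by apply: eq_bigr => u _; rewrite eq_sym mulrCA.
rewrite (partition_big p xpredT) //=; apply: eq_bigr => i _.
rewrite expr2 big_distrl /=; apply: eq_bigr => t /eqP <-.
by rewrite mulrC.
Qed.

Section QuadraticForm.
Variables (R : comNzRingType) (n : nat) (V : 'I_n * 'I_n -> R).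
Implicit Types (t u : 'I_n * 'I_n) (X Y : {set 'I_n}).

Definition edge_pair t u := ([set t.1; u.1], [set t.2; u.2]).

Definition qform (D : {set {set 'I_n} * {set 'I_n}}) : R :=
  \sum_t \sum_u (edge_pair t u \in D)%:R * (V t * V u).

Definition mass X Y : R := \sum_t ((t.1 \in X) && (t.2 \in Y))%:R * V t.

Definition row_sum i : R := \sum_(t | t.1 == i) V t.
Definition col_sum j : R := \sum_(t | t.2 == j) V t.
Definition total : R := \sum_t V t.

Lemma qform_cover (P : {set {set {set 'I_n} * {set 'I_n}}}) :
  trivIset P -> qform (cover P) = \sum_(S in P) qform S.
Proof.
move=> tP; rewrite /qform.
under eq_bigr => t _ do under eq_bigr => u _ do rewrite natr_mem_cover // big_distrl.
under eq_bigr do rewrite exchange_big.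
exact: exchange_big.
Qed.

Lemma qform_block X Y X' Y' : [disjoint X & Y] -> [disjoint X' & Y'] ->
  qform (setX (bip_edges X Y) (bip_edges X' Y')) =
  (mass X X' * mass Y Y' + mass X Y' * mass Y X') *+ 2.
Proof.
move=> dXY dXY'.
have excl (A B : {set 'I_n}) (i k : 'I_n) : [disjoint A & B] ->
    ~~ ((i \in A) && (k \in B) && ((i \in B) && (k \in A))).
  move=> dAB; apply/negP => /andP[/andP[iA _] /andP[iB _]].
  by rewrite (disjointFr dAB iA) in iB.
transitivity (mass X X' * mass Y Y' + mass X Y' * mass Y X' +
              mass Y X' * mass X Y' + mass Y Y' * mass X X').
  rewrite /qform /mass !big_distrlr -!big_split; apply: eq_bigr => t _; rewrite -!big_split.
  apply: eq_bigr => u _; rewrite in_setX !mem_bip_edges natr_and !natr_or ?excl //.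
  by rewrite !natr_and /=; ring.
ring.
Qed.

Lemma sum_row_sum : \sum_i row_sum i = total.
Proof. by rewrite /total (partition_big fst xpredT). Qed.

Lemma sum_col_sum : \sum_j col_sum j = total.
Proof. by rewrite /total (partition_big snd xpredT). Qed.

Lemma qform_complete : qform (setX (edgeK n) (edgeK n)) =
  total ^+ 2 - \sum_i row_sum i ^+ 2 - \sum_j col_sum j ^+ 2 + \sum_t V t ^+ 2.
Proof.
have edgeKE t u : (edge_pair t u \in setX (edgeK n) (edgeK n))%:R =
    1 - (t.1 == u.1)%:R - (t.2 == u.2)%:R + (u == t)%:R :> R.
  case: t u => [a b] [c d]; rewrite in_setX !inE !cards2 /= xpair_eqE.
  rewrite ![c == _]eq_sym ![d == _]eq_sym.
  by case: (a == c); case: (b == d) => /=; ring.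
have -> : total ^+ 2 = \sum_t \sum_u V t * V u by rewrite expr2 big_distrlr.
have -> : \sum_t V t ^+ 2 = \sum_t \sum_u (u == t)%:R * (V t * V u).
  by apply: eq_bigr => t _; rewrite sum_natr_mul big_pred1_eq expr2.
rewrite /row_sum /col_sum -(sum_fiber_sqr fst) -(sum_fiber_sqr snd).
rewrite -!sumrB -big_split /=; apply: eq_bigr => t _.
rewrite -!sumrB -big_split /=; apply: eq_bigr => u _.
by rewrite edgeKE; ring.
Qed.
End QuadraticForm.

Lemma qform_complete_gt0 (R : realDomainType) n (V : 'I_n * 'I_n -> R) s :
  (2 <= n)%N -> (forall i, row_sum V i = s) -> (forall j, col_sum V j = s) ->
  (exists t, V t != 0) -> 0 < qform V (setX (edgeK n) (edgeK n)).
Proof.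
move=> n_ge2 rows cols [t0 Vt0].
have totalE : total V = n%:R * s.
  rewrite -sum_row_sum; under eq_bigr do rewrite rows.
  by rewrite sumr_const card_ord mulr_natl.
rewrite qform_complete totalE; under eq_bigr do rewrite rows.
under [X in _ - X + _]eq_bigr do rewrite cols.
rewrite !sumr_const !card_ord.
have -> : (n%:R * s) ^+ 2 - s ^+ 2 *+ n - s ^+ 2 *+ n = (n - 2)%:R * n%:R * s ^+ 2.
  by rewrite natrB //; ring.
have margins_ge0 : 0 <= (n - 2)%:R * n%:R * s ^+ 2 :> R.
  by apply: mulr_ge0; [apply: mulr_ge0; exact: ler0n | exact: sqr_ge0].
have squares_gt0 : 0 < \sum_t V t ^+ 2.
  rewrite (bigD1 t0) //= ltr_wpDr ?sumr_ge0 // => [t _|]; first exact: sqr_ge0.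
  by rewrite lt0r sqrf_eq0 Vt0 sqr_ge0.
exact: ltr_wpDl.
Qed.

Lemma exists_nonzero_solution (F : fieldType) (T I : finType) (c : I -> T -> F) :
  (#|I| < #|T|)%N ->
  exists2 v : T -> F, exists t, v t != 0 & forall r, \sum_t c r t * v t = 0.
Proof.
move=> ltIT.
pose A := \matrix_(x < #|T|, r < #|I|) c (enum_val r) (enum_val x).
have : kermx A != 0 by rewrite kermx_eq0 /row_free; have := rank_leq_col A; lia.
case/rowV0Pn => w /sub_kermxP wA w0.
exists (fun t => w 0 (enum_rank t)).
  case: (pickP (fun x => w 0 x != 0)) => [x wx | w_eq0].
    by exists (enum_val x); rewrite enum_valK.
  by case/eqP: w0; apply/rowP => x; rewrite mxE; apply/eqP/negbFE/w_eq0.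
move=> r; have := congr1 (fun M : 'M_(1, #|I|) => M 0 (enum_rank r)) wA.
rewrite !mxE => wAr; apply: etrans wAr.
rewrite (reindex enum_rank) /=; last exact/onW_bij/enum_rank_bij.
by apply: eq_bigr => t _; rewrite mxE !enum_rankK mulrC.
Qed.

Lemma exists_balanced_solution (F : fieldType) m (I : finType)
    (c : I -> 'I_m.+1 * 'I_m.+1 -> F) : (#|I| + 2 * m < m.+1 ^ 2)%N ->
  exists V : 'I_m.+1 * 'I_m.+1 -> F,
    [/\ exists t, V t != 0, forall r, \sum_t c r t * V t = 0,
        forall i, row_sum V i = row_sum V ord0 & forall j, col_sum V j = row_sum V ord0].
Proof.
move=> small.
(* Only 2m margin equations fit; column 0 then follows from the totals. *)
pose c' (r : I + 'I_m * bool) t := match r with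
  | inl r => c r t
  | inr (i, true) => (t.1 == lift ord0 i)%:R - (t.1 == ord0)%:R
  | inr (j, false) => (t.2 == lift ord0 j)%:R - (t.1 == ord0)%:R
  end.
have [|V V0 c'V] := exists_nonzero_solution c'.
  by rewrite card_sum !card_prod card_bool !card_ord mulnn mulnC.
have diffE (P Q : pred ('I_m.+1 * 'I_m.+1)) :
    \sum_t ((P t)%:R - (Q t)%:R) * V t = \sum_(t | P t) V t - \sum_(t | Q t) V t.
  by under eq_bigr do rewrite mulrBl; rewrite sumrB !sum_natr_mul.
have rows i : row_sum V i = row_sum V ord0.
  case: (unliftP ord0 i) => [i' ->|-> //]; apply/eqP; rewrite -subr_eq0.
  by rewrite -(c'V (inr (i', true))) /= diffE.
have cols_lift j : col_sum V (lift ord0 j) = row_sum V ord0.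
  by apply/eqP; rewrite -subr_eq0 -(c'V (inr (j, false))) /= diffE.
exists V; split=> // [r|j]; first exact: (c'V (inl r)).
case: (unliftP ord0 j) => [j' ->|->]; first exact: cols_lift.
have := sum_col_sum V; rewrite -(sum_row_sum V) !big_ord_recl.
under eq_bigr do rewrite cols_lift; under [in RHS]eq_bigr do rewrite rows.
exact: addIr.
Qed.

Definition block_data n := (({set 'I_n} * {set 'I_n}) * ({set 'I_n} * {set 'I_n}))%type.

Definition presents n (S : {set {set 'I_n} * {set 'I_n}}) (q : block_data n) :=
  [&& [disjoint q.1.1 & q.1.2], [disjoint q.2.1 & q.2.2] &
      S == setX (bip_edges q.1.1 q.1.2) (bip_edges q.2.1 q.2.2)].

Definition block_classes n (S : {set {set 'I_n} * {set 'I_n}}) : block_data n :=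
  odflt ((set0, set0), (set0, set0)) [pick q | presents S q].

Lemma block_classesP n (S : {set {set 'I_n} * {set 'I_n}}) :
  is_block S -> presents S (block_classes S).
Proof.
rewrite /block_classes; case: pickP => [q //|no_presentation].
case/existsP=> E1 /existsP[E2 /and3P[/existsP[X /existsP[Y /and4P[_ _ dXY /eqP->]]]]].
case/existsP=> X' /existsP[Y' /and4P[_ _ dXY' /eqP->]] /eqP SE.
by have := no_presentation ((X, Y), (X', Y')); rewrite /presents /= dXY dXY' SE eqxx.
Qed.

Lemma block_partition_card m (P : {set {set {set 'I_m.+1} * {set 'I_m.+1}}}) :
  (0 < m)%N -> block_partition P -> (m ^ 2 < 2 * #|P|)%N.
Proof.
move=> m_gt0 /andP[/and3P[/eqP coverP trivP _] /forallP blocks].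
rewrite ltnNge; apply/negP => small.
pose c (r : {S | S \in P} * bool) (t : 'I_m.+1 * 'I_m.+1) : rat :=
  let q := block_classes (val r.1) in
  ((t.1 \in q.1.1) && (t.2 \in if r.2 then q.2.1 else q.2.2))%:R.
have [|V [V0 cV rows cols]] := exists_balanced_solution c.
  rewrite card_prod card_sig card_bool.
  have -> : #|[pred S | S \in P]| = #|P| by apply: eq_card.
  lia.
have := qform_complete_gt0 (m_gt0 : (2 <= m.+1)%N) rows cols V0.
rewrite -coverP qform_cover // big1 ?ltxx // => S PS.
have := block_classesP (implyP (blocks S) PS).
have := cV (exist _ S PS, true); have := cV (exist _ S PS, false); rewrite /c /=.
case: (block_classes S) => [[X Y] [X' Y']] /= massXY' massXX' /and3P[dXY dXY' /eqP->].
by rewrite qform_block // /mass massXX' massXY' !mul0r add0r mul0rn.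
Qed.

Local Close Scope ring_scope.

Lemma leq_g n b : b <= #|edgeK n| ^ 2 ->
  (forall P : {set {set {set 'I_n} * {set 'I_n}}}, block_partition P -> b <= #|P|) ->
  b <= g n.
Proof.
move=> b_le_default b_le_card; apply: (big_ind (fun x => b <= x)) => // x y.
by rewrite leq_min => -> ->.
Qed.

Theorem mainTheorem9 (n : nat) : 2 <= n -> ((n - 1) ^ 2 + 1 + 1) %/ 2 <= g n.
Proof.
case: n => // m; rewrite ltnS subn1 /= => m_gt0.
have ceil_le x : m ^ 2 < 2 * x -> (m ^ 2 + 1 + 1) %/ 2 <= x by lia.
apply: leq_g => [|P /(block_partition_card m_gt0)/ceil_le //].
apply: ceil_le; rewrite card_edgeK.
have : m <= 'C(m.+1, 2) by rewrite binS bin1 leq_addl.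
nia.
Qed.
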